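(* For every $k\ge1$, a transduction $f:\Sigma^*\rightharpoonup\Gamma^*$ is $k$-lexicographic (i.e. belongs to $\mathsf{Lex}_k$) if and only if it is $k$-lexicographic automatic.
   Context: Alphabets are finite. For words $u,v$ of equal length over alphabets $\Sigma_1,\Sigma_2$, $u\otimes v$ is the word over $\Sigma_1\times\Sigma_2$ with $(u\otimes v)[i]=(u[i],v[i])$. A transduction is a partial function $f:\Sigma^*\rightharpoonup\Gamma^*$. A simple transduction is a transduction $f=\sum_{i=1}^n L_i\triangleright w_i$, where $L_1,\dots,L_n\subseteq\Sigma^*$ are pairwise disjoint regular languages and each $w_i\in\Gamma^{\le 1}$ is a word of length at most 1. It satisfies $f(u)=w_i$ if $u\in L_i$, and $f(u)$ is undefined if $u\notin\bigcup_iL_i$. An ordered alphabet is a pair $\lambda=(B,\prec)$ with $B$ a finite set and $\prec$ a strict linear order on $B$. The order is extended to $B^n$ for each $n$ by: $u\prec v$ iff there is $i\le n$ with $u[i]\prec v[i]$ and $u[j]=v[j]$ for all $i<j\le n$ (most significant letter on the right). For a transduction $f:(\Sigma\times B)^*\rightharpoonup\Gamma^*$, the transduction $\mathsf{maplex}_\lambda f:\Sigma^*\rightharpoonup\Gamma^*$ maps $u$ to $f(u\otimes b_1)f(u\otimes b_2)\cdots f(u\otimes b_m)$, where $b_1\prec\cdots\prec b_m$ is the increasing enumeration of all of $B^{|u|}$. It is defined on $u$ iff every $f(u\otimes b_j)$ is defined. The classes are defined inductively: - $\mathsf{Lex}_0$ is the class of simple transductions; - $\mathsf{Lex}_{k+1}=\{\mathsf{maplex}_\lambda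 f: \lambda=(B,\prec)\text{ an ordered alphabet},\ f:(\Sigma\times B)^*\rightharpoonup\Gamma^*\text{ in }\mathsf{Lex}_k\}$; - $\mathsf{Lex}=\bigcup_k\mathsf{Lex}_k$, the lexicographic transductions. Elements of $\mathsf{Lex}_k$ are called $k$-lexicographic. A $k$-lexicographic automatic transducer from $\Sigma^*$ to $\Gamma^*$ consists of: - ordered alphabets $\lambda_i=(B_i,\prec_i)$, $1\le i\le k$, with $B=B_1\times\cdots\times B_k$; - finite automata $A_{dom}$ over $\Sigma$, $A_{univ}$ over $\Sigma\times B$, and $A_\gamma$ over $\Sigma\times B$ for each $\gamma\in\Gamma$. These must satisfy: for every $u\in L(A_{dom})$ and every $x$ with $u\otimes x\in L(A_{univ})$, exactly one $\gamma$ has $u\otimes x\in L(A_\gamma)$. For $x=x_1\otimes\cdots\otimes x_k$ and $y=y_1\otimes\cdots\otimes y_k$ with $x_i,y_i\in B_i^n$, let $x\prec_{\bar\lambda}y$ iff there is $i$ with $x_i\prec_i y_i$ (in the lexicographic extension) and $x_j=y_j$ for all $j<i$. On $u\in L(A_{dom})$, the output is the word whose positions are the elements of $V=\{x\in B^{|u|}: u\otimes x\in L(A_{univ})\}$ in increasing $\prec_{\bar\lambda}$-order, position $x$ carrying the label $\gamma$ with $u\otimes x\in L(A_\gamma)$. The output is undefined if $u\notin L(A_{dom})$. A transduction is $k$-lexicographic automatic if it is defined by such a transducer. *)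

From mathcomp Require Import all_boot.
Set Implicit Arguments.
Unset Strict Implicit.
Unset Printing Implicit Defensive.

Definition transduction (S G : finType) := seq S -> option (seq G).

Record dfa (A : finType) := DFA {
  dfa_st : finType;
  dfa_s : dfa_st;
  dfa_acc : pred dfa_st;
  dfa_tr : dfa_st -> A -> dfa_st }.

Definition accepts (A : finType) (M : dfa A) (w : seq A) : bool :=
  @dfa_acc A M (foldl (@dfa_tr A M) (@dfa_s A M) w).

Definition wtensor (S B : finType) (u : seq S) (x : seq B) : seq (S * B) :=
  zip u x.

Definition simple_trans (S G : finType) (f : transduction S G) : Prop :=
  exists (n : nat) (L : 'I_n -> dfa S) (w : 'I_n -> seq G),
    (forall i j : 'I_n, i != j -> forall u, ~~ (accepts (L i) u && accepts (L j) u)) /\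
    (forall i, size (w i) <= 1) /\
    (forall u, (forall i, accepts (L i) u -> f u = Some (w i)) /\
               ((forall i, ~~ accepts (L i) u) -> f u = None)).

Record ordAlph := OrdAlph {
  oa_T :> finType;
  oa_lt : rel oa_T;
  oa_irr : irreflexive oa_lt;
  oa_trans : transitive oa_lt;
  oa_total : forall x y : oa_T, x != y -> oa_lt x y || oa_lt y x }.

(* Extension of the order to B^n: most significant letter on the right. *)
Definition rlex_lt (B : ordAlph) (n : nat) (u v : n.-tuple B) : bool :=
  [exists i : 'I_n, oa_lt (tnth u i) (tnth v i) &&
     [forall j : 'I_n, (i < j) ==> (tnth u j == tnth v j)]].

Definition rlex_le (B : ordAlph) (n : nat) (u v : n.-tuple B) : bool :=
  (u == v) || rlex_lt u v.

Definition enum_words (B : ordAlph) (n : nat) : seq (n.-tuple B) :=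
  sort (@rlex_le B n) (enum {: n.-tuple B}).

Definition maplex (S G : finType) (B : ordAlph)
    (f : transduction (S * B)%type G) : transduction S G :=
  fun u =>
    let outs := map (fun x : (size u).-tuple B => f (wtensor u x))
                    (enum_words B (size u)) in
    if all (fun o => o != None) outs then Some (flatten (pmap id outs)) else None.

Inductive isLex : nat -> forall (S G : finType), transduction S G -> Prop :=
  | Lex0 (S G : finType) (f : transduction S G) :
      simple_trans f -> isLex 0 f
  | LexS (k : nat) (S G : finType) (B : ordAlph)
      (g : transduction (S * B)%type G) (f : transduction S G) :
      isLex k g -> (forall u, f u = maplex g u) -> isLex k.+1 f.

Definition prodAlph (k : nat) (lam : 'I_k -> ordAlph) : finType :=
  {dffun forall i : 'I_k, lam i}.

Definition comp_word (k : nat) (lam : 'I_k -> ordAlph) (n : nat)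
    (x : n.-tuple (prodAlph lam)) (i : 'I_k) : n.-tuple (lam i) :=
  map_tuple (fun b : prodAlph lam => b i) x.

Definition multi_lt (k : nat) (lam : 'I_k -> ordAlph) (n : nat)
    (x y : n.-tuple (prodAlph lam)) : bool :=
  [exists i : 'I_k, rlex_lt (comp_word x i) (comp_word y i) &&
     [forall j : 'I_k, (j < i) ==> (comp_word x j == comp_word y j)]].

Definition multi_le (k : nat) (lam : 'I_k -> ordAlph) (n : nat)
    (x y : n.-tuple (prodAlph lam)) : bool :=
  (x == y) || multi_lt x y.

Definition auto_valid (S G : finType) (k : nat) (lam : 'I_k -> ordAlph)
    (Adom : dfa S) (Auniv : dfa (S * prodAlph lam)%type)
    (Ag : G -> dfa (S * prodAlph lam)%type) : Prop :=
  forall u, accepts Adom u ->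
    forall x : (size u).-tuple (prodAlph lam),
      accepts Auniv (wtensor u x) ->
      exists! g : G, accepts (Ag g) (wtensor u x).

Definition auto_sem (S G : finType) (k : nat) (lam : 'I_k -> ordAlph)
    (Adom : dfa S) (Auniv : dfa (S * prodAlph lam)%type)
    (Ag : G -> dfa (S * prodAlph lam)%type) : transduction S G :=
  fun u =>
    if accepts Adom u then
      let V := [seq x : (size u).-tuple (prodAlph lam) <- enum {: (size u).-tuple (prodAlph lam)}
                 | accepts Auniv (wtensor u x)] in
      let Vs := sort (@multi_le k lam (size u)) V in
      Some (pmap (fun x : (size u).-tuple (prodAlph lam) => [pick g : G | accepts (Ag g) (wtensor u x)]) Vs)
    else None.

Definition lex_automatic (k : nat) (S G : finType) (f : transduction S G) : Prop :=
  exists (lam : 'I_k -> ordAlph) (Adom : dfa S)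
         (Auniv : dfa (S * prodAlph lam)%type)
         (Ag : G -> dfa (S * prodAlph lam)%type),
    auto_valid Adom Auniv Ag /\ forall u, f u = auto_sem Adom Auniv Ag u.

(* Automatic transducers make sense for any family of strict total orders on
   the tuples C^n over their auxiliary alphabet C, and they transfer along
   alphabet bijections that respect the orders.  Over a one-letter alphabet
   they are exactly the simple transductions.  Writing B_1 x ... x B_(k+1) as
   B_1 x (B_2 x ... x B_(k+1)), the order of the transducer compares the
   B_1-track first, so sorting by it lists, for the B_1-words in increasing
   order, blocks sorted by the remaining order: this is literally maplex over
   B_1.  Hence maplex of an automatic g is automatic (its domain being the
   universal projection of that of g), and conversely an automatic f is maplex
   of the automatic transducer that reads the B_1-track as input. *)

From mathcomp Require Import all_boot zify.

Set Implicit Arguments.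
Unset Strict Implicit.
Unset Printing Implicit Defensive.

Lemma pmap_map (A B C : Type) (f : B -> option C) (g : A -> B) s :
  pmap f (map g s) = pmap (fun x => f (g x)) s.
Proof. by elim: s => //= a s ->. Qed.

Lemma pmap_flatten (A T : Type) (f : A -> option T) (ss : seq (seq A)) :
  pmap f (flatten ss) = flatten (map (pmap f) ss).
Proof. by elim: ss => //= s ss <-; rewrite pmap_cat. Qed.

Lemma flatten_map_filter (A T : Type) (F : A -> seq T) (p : pred A) s :
  (forall a, ~~ p a -> F a = [::]) -> flatten (map F s) = flatten (map F (filter p s)).
Proof.
by move=> F_nil; elim: s => //= a s IH; case: ifP => pa /=; rewrite IH // F_nil ?pa.
Qed.

Lemma enum_singleton (T : finType) (t0 : T) : (forall t, t = t0) -> enum T = [:: t0].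
Proof.
move=> T_single; have := enum_uniq T; have : t0 \in enum T by rewrite mem_enum.
case: (enum T) => [|x [|y s]] //; first by rewrite (T_single x).
by move=> _; rewrite /= (T_single x) (T_single y) inE eqxx.
Qed.

Lemma perm_map_enum (T T' : finType) (f : T -> T') :
  bijective f -> perm_eq (map f (enum T)) (enum T').
Proof.
case=> g fK gK; apply: uniq_perm; first by rewrite (map_inj_uniq (can_inj fK)) enum_uniq.
  exact: enum_uniq.
by move=> y; rewrite mem_enum -[y]gK map_f ?mem_enum.
Qed.

Lemma map_tuple_bij (T T' : Type) (f : T -> T') n :
  bijective f -> bijective (@map_tuple n _ _ f).
Proof.
case=> g fK gK; exists (map_tuple g) => x; apply: val_inj => /=;
  by rewrite -map_comp (eq_map (_ : _ =1 id)) ?map_id.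
Qed.

Lemma exists_before_recl k (A E : 'I_k.+1 -> bool) :
  [exists i : 'I_k.+1, A i && [forall j : 'I_k.+1, (j < i) ==> E j]] =
  A ord0 || E ord0 &&
    [exists i : 'I_k, A (lift ord0 i) && [forall j : 'I_k, (j < i) ==> E (lift ord0 j)]].
Proof.
apply/existsP/idP => [[i]|].
  case: (unliftP ord0 i) => [i' ->|->] /andP[Ai /forallP Ebefore]; last by rewrite Ai.
  have := Ebefore ord0; rewrite lift0 ltn0Sn => /= ->.
  apply/orP; right; apply/existsP; exists i'; rewrite Ai /=.
  apply/forallP => j; apply/implyP => ji.
  by have := Ebefore (lift ord0 j); rewrite !lift0 ltnS ji.
case/orP => [A0|/andP[E0 /existsP[i /andP[Ai /forallP Ebefore]]]].
  by exists ord0; rewrite A0; apply/forallP.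
exists (lift ord0 i); rewrite Ai /=; apply/forallP => j.
by case: (unliftP ord0 j) => [j' ->|->] //; rewrite !lift0 ltnS; apply: Ebefore.
Qed.

Section TupleZip.
Variables (B D : finType) (n : nat).

Definition tfst (x : n.-tuple (B * D)%type) : n.-tuple B := map_tuple fst x.
Definition tsnd (x : n.-tuple (B * D)%type) : n.-tuple D := map_tuple snd x.
Definition tzip (b : n.-tuple B) (d : n.-tuple D) : n.-tuple (B * D)%type :=
  [tuple of zip b d].

Lemma unzip1_tzip b d : unzip1 (tzip b d) = b.
Proof. by apply: unzip1_zip; rewrite !size_tuple. Qed.

Lemma unzip2_tzip b d : unzip2 (tzip b d) = d.
Proof. by apply: unzip2_zip; rewrite !size_tuple. Qed.

Lemma tfst_tzip b d : tfst (tzip b d) = b.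
Proof. exact/val_inj/unzip1_tzip. Qed.

Lemma tsnd_tzip b d : tsnd (tzip b d) = d.
Proof. exact/val_inj/unzip2_tzip. Qed.

Lemma tzip_unzip x : tzip (tfst x) (tsnd x) = x.
Proof. exact/val_inj/zip_unzip. Qed.

Lemma tzip_inj b d b' d' : tzip b d = tzip b' d' -> b = b' /\ d = d'.
Proof.
move=> E; split; first by rewrite -(tfst_tzip b d) E tfst_tzip.
by rewrite -(tsnd_tzip b d) E tsnd_tzip.
Qed.
End TupleZip.

(** * Automata constructions *)

Section DfaConstructions.
Variable A : finType.

Definition dfa_comb (I : finType) (M : I -> dfa A) (P : pred {ffun I -> bool}) :
    dfa A :=
  @DFA A {dffun forall i, dfa_st (M i)} [ffun i => dfa_s (M i)]
    (fun q => P [ffun i => dfa_acc (q i)])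
    (fun q a => [ffun i => dfa_tr (q i) a]).

Lemma accepts_comb I M P w :
  accepts (@dfa_comb I M P) w = P [ffun i => accepts (M i) w].
Proof.
rewrite /accepts /=.
have run q v : foldl (fun (q : {dffun forall i, dfa_st (M i)}) a =>
                        [ffun i => dfa_tr (q i) a]) q v =
               [ffun i => foldl (@dfa_tr A (M i)) (q i) v].
  by elim: v q => [|a v IH] q /=; apply/ffunP => i; rewrite ?IH !ffunE.
by rewrite run; congr P; apply/ffunP => i; rewrite !ffunE.
Qed.
End DfaConstructions.

Section DfaComap.
Variables (A A' : finType) (M : dfa A).

Definition dfa_comap (h : A' -> option A) : dfa A' :=
  @DFA A' (option (dfa_st M)) (Some (dfa_s M))
    (fun o => if o is Some q then dfa_acc q else false)
    (fun o a => if o is Some q then omap (dfa_tr q) (h a) else None).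

Lemma accepts_comap h w :
  accepts (dfa_comap h) w = all (fun a => h a != None) w && accepts M (pmap h w).
Proof.
rewrite /accepts /=.
have stuck v : foldl (fun o a => if o is Some q then omap (dfa_tr q) (h a) else None)
                 None v = None by elim: v.
elim: w (dfa_s M) => [|a w IH] q //=.
by case: (h a) => [b|] /=; rewrite ?IH ?stuck.
Qed.

Definition dfa_premap (h : A' -> A) : dfa A' := dfa_comap (fun a => Some (h a)).

Lemma accepts_premap h w : accepts (dfa_premap h) w = accepts M (map h w).
Proof.
rewrite accepts_comap.
have -> : pmap (fun a => Some (h a)) w = map h w by elim: w => //= a w ->.
by rewrite (@eq_all _ _ predT) ?all_predT.
Qed.
End DfaComap.

Section DfaForall.
Variables (S B : finType) (M : dfa (S * B)%type).

Definition dfa_forall : dfa S :=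
  @DFA S {set dfa_st M} [set dfa_s M]
    (fun X => [forall q in X, dfa_acc q])
    (fun X a => [set dfa_tr q (a, b) | q in X, b in B]).

Lemma dfa_forall_run (u : seq S) (X : {set dfa_st M}) q' :
  q' \in foldl (@dfa_tr S dfa_forall) X u <->
  exists2 q, q \in X & exists2 x : seq B,
    size x = size u & q' = foldl (@dfa_tr _ M) q (zip u x).
Proof.
elim: u X => [|a u IH] X /=.
  split=> [qX|[q qX [[|b x] //= _ ->]]] //.
  by exists q' => //; exists [::].
apply: (iff_trans (IH _)); split.
  case=> q1 /imset2P [q b qX _ ->] [x sx ->].
  by exists q => //; exists (b :: x); rewrite /= ?sx.
case=> q qX [[|b x] //= [sx] ->].
by exists (dfa_tr q (a, b)); [apply/imset2P; exists q b | exists x].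
Qed.

Lemma accepts_forall u :
  accepts dfa_forall u = [forall x : (size u).-tuple B, accepts M (zip u x)].
Proof.
apply/forall_inP/forallP => [all_acc x|all_acc q /dfa_forall_run[q0 /set1P -> [x sx ->]]].
  apply: all_acc; apply/dfa_forall_run; exists (dfa_s M); first exact: set11.
  by exists x; rewrite ?size_tuple.
exact: (all_acc (Tuple (introT eqP sx))).
Qed.
End DfaForall.

(** * Strict total orders on words *)

Definition strict_total (T : eqType) (lt : rel T) :=
  [/\ irreflexive lt, transitive lt & forall x y, x != y -> lt x y || lt y x].

Lemma eq_strict_total (T : eqType) (lt1 lt2 : rel T) :
  lt1 =2 lt2 -> strict_total lt1 -> strict_total lt2.
Proof.
move=> eq12 [irr tr tot]; split=> [x|y x z|x y]; rewrite -!eq12 //; first exact: tr.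
exact: tot.
Qed.

Definition reflc (T : eqType) (lt : rel T) : rel T := fun x y => (x == y) || lt x y.

Section ReflexiveClosure.
Variables (T : eqType) (lt : rel T).
Hypothesis lt_st : strict_total lt.

Lemma reflc_total : total (reflc lt).
Proof.
move=> x y; rewrite /reflc; case: (eqVneq x y) => [->|nxy] //=.
by case: lt_st => _ _ ->.
Qed.

Lemma reflc_trans : transitive (reflc lt).
Proof.
move=> y x z /orP[/eqP -> //|xy] /orP[/eqP <-|yz]; first by rewrite /reflc xy orbT.
by case: lt_st => _ tr _; rewrite /reflc (tr _ _ _ xy yz) orbT.
Qed.

Lemma reflc_anti : antisymmetric (reflc lt).
Proof.
move=> x y /andP[/orP[/eqP //|xy] /orP[/eqP //|yx]].
by case: lt_st => irr tr _; have := irr x; rewrite (tr _ _ _ xy yx).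
Qed.

Lemma sort_reflc_perm s1 s2 :
  perm_eq s1 s2 -> sort (reflc lt) s1 = sort (reflc lt) s2.
Proof. exact/(perm_sortP reflc_total reflc_trans reflc_anti). Qed.

Lemma sort_reflc_sorted : forall s, sorted (reflc lt) (sort (reflc lt) s).
Proof. exact: sort_sorted reflc_total. Qed.

Lemma sort_reflc_map (U : eqType) (ltU : rel U) (f : U -> T) :
  injective f -> (forall x y, lt (f x) (f y) = ltU x y) ->
  forall s, sort (reflc lt) (map f s) = map f (sort (reflc ltU) s).
Proof.
move=> f_inj f_mono s; symmetry; apply: map_sort => x y.
by rewrite /reflc (inj_eq f_inj) f_mono.
Qed.
End ReflexiveClosure.

Section LexFamily.
Variables (I : finType) (key : I -> nat) (T : I -> eqType).
Variable lt : forall i, rel (T i).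
Hypotheses (key_inj : injective key) (lt_st : forall i, strict_total (@lt i)).

Definition lexf (x y : forall i, T i) :=
  [exists i, lt (x i) (y i) && [forall j, (key j < key i) ==> (x j == y j)]].

Lemma lexf_trans y x z : lexf x y -> lexf y z -> lexf x z.
Proof.
move=> /existsP[i /andP[xy_i /forallP x_y]] /existsP[j /andP[yz_j /forallP y_z]].
apply/existsP; case: (ltngtP (key i) (key j)) => [ij|ji|/key_inj eij].
- exists i; have := y_z i; rewrite ij => /eqP <-; rewrite xy_i /=.
  apply/forallP => l; apply/implyP => li.
  by have := y_z l; rewrite (ltn_trans li ij) => /eqP <-; have := x_y l; rewrite li.
- exists j; have := x_y j; rewrite ji => /eqP ->; rewrite yz_j /=.
  apply/forallP => l; apply/implyP => lj.
  by have := x_y l; rewrite (ltn_trans lj ji) => /eqP ->; have := y_z l; rewrite lj.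
- subst j; exists i; case: (lt_st i) => _ tr _; rewrite (tr _ _ _ xy_i yz_j) /=.
  apply/forallP => l; apply/implyP => li.
  by have := y_z l; rewrite li => /eqP <-; have := x_y l; rewrite li.
Qed.

Lemma lexf_total x y : [exists i, x i != y i] -> lexf x y || lexf y x.
Proof.
case/existsP=> i0 ne0.
case: (@arg_minnP _ i0 (fun i => x i != y i) key ne0) => i ne_i min_i.
have eq_before j : key j < key i -> x j == y j.
  by move=> ji; apply: contraTT ji => /min_i; rewrite -leqNgt.
case: (lt_st i) => _ _ tot; case/orP: (tot _ _ ne_i) => lt_i; apply/orP; [left|right];
  apply/existsP; exists i; rewrite lt_i /=; apply/forallP => j; apply/implyP.
  exact: eq_before.
by move=> /eq_before; rewrite eq_sym.
Qed.

Lemma lexf_strict_total (X : eqType) (p : X -> forall i, T i) :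
  (forall x y, (forall i, p x i = p y i) -> x = y) ->
  strict_total (fun x y => lexf (p x) (p y)).
Proof.
move=> p_inj; split.
- move=> x; apply/existsP => -[i /andP[lt_i _]].
  by case: (lt_st i) => irr _ _; rewrite irr in lt_i.
- by move=> y x z; apply: lexf_trans.
- move=> x y nxy; apply: lexf_total; apply: contraNT nxy => /existsPn eq_xy.
  by apply/eqP/p_inj => i; apply/eqP; rewrite -[_ == _]negbK eq_xy.
Qed.
End LexFamily.

Lemma oa_strict_total (B : ordAlph) : strict_total (@oa_lt B).
Proof. split; [exact: oa_irr | exact: oa_trans | exact: oa_total]. Qed.

Lemma rlex_ltE (B : ordAlph) n (u v : n.-tuple B) :
  rlex_lt u v = lexf (fun i : 'I_n => n - i) (fun _ => @oa_lt B) (tnth u) (tnth v).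
Proof.
apply: eq_existsb => -[i ltin]; congr (_ && _); apply: eq_forallb => -[j ltjn] /=.
by congr (_ ==> _); apply/idP/idP; lia.
Qed.

Lemma rlex_strict_total (B : ordAlph) n : strict_total (@rlex_lt B n).
Proof.
apply: (@eq_strict_total _ (fun u v => lexf (fun i : 'I_n => n - i)
  (fun _ => @oa_lt B) (tnth u) (tnth v))); first by move=> u v; rewrite rlex_ltE.
apply: lexf_strict_total.
- by move=> [i ?] [j ?] /= eq_ij; apply/val_inj => /=; lia.
- by move=> i; apply: oa_strict_total.
- exact: eq_from_tnth.
Qed.

Lemma multi_strict_total k (lam : 'I_k -> ordAlph) n : strict_total (@multi_lt k lam n).
Proof.
apply: (@lexf_strict_total _ val (fun i => n.-tuple (lam i))
          (fun i => @rlex_lt (lam i) n) val_inj _ _ (@comp_word k lam n)).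
  by move=> i; apply: rlex_strict_total.
move=> x y eq_xy; apply: eq_from_tnth => t; apply/ffunP => i.
by have := congr1 (fun w => tnth w t) (eq_xy i); rewrite !tnth_map.
Qed.

Section EnumWords.
Variables (B : ordAlph) (n : nat).

Lemma enum_words_sorted : sorted (@rlex_le B n) (enum_words B n).
Proof. exact: sort_reflc_sorted (rlex_strict_total B n) _. Qed.

Lemma enum_words_uniq : uniq (enum_words B n).
Proof. by rewrite sort_uniq enum_uniq. Qed.

Lemma mem_enum_words b : b \in enum_words B n.
Proof. by rewrite mem_sort mem_enum. Qed.
End EnumWords.

Section PairOrder.
Variables (B : ordAlph) (D : finType) (ltD : forall n, rel (n.-tuple D)).
Hypothesis ltD_st : forall n, strict_total (@ltD n).

Definition pair_lt n (x y : n.-tuple (B * D)%type) :=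
  rlex_lt (tfst x) (tfst y) || (tfst x == tfst y) && ltD (tsnd x) (tsnd y).

Lemma pair_lt_strict_total n : strict_total (@pair_lt n).
Proof.
have [irrB trB totB] := rlex_strict_total B n; have [irrD trD totD] := ltD_st n.
split.
- by move=> x; rewrite /pair_lt irrB irrD andbF.
- move=> y x z /orP[xy|/andP[/eqP exy xy]] /orP[yz|/andP[/eqP eyz yz]];
    rewrite /pair_lt ?exy -?eyz ?(trB _ _ _ xy yz) ?xy ?yz //.
  by rewrite eqxx (trD _ _ _ xy yz) orbT.
- move=> x y nxy; rewrite /pair_lt; case: (eqVneq (tfst x) (tfst y)) => [exy|/totB].
    rewrite exy irrB /=; apply: totD; apply: contra nxy => /eqP exy2.
    by rewrite -(tzip_unzip x) -(tzip_unzip y) exy exy2.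
  by case/orP=> ->; rewrite ?orbT.
Qed.

Lemma sorted_pair_blocks n (s : seq (n.-tuple B)) (F : n.-tuple B -> seq (n.-tuple D)) :
  uniq s -> sorted (@rlex_le B n) s -> (forall b, sorted (reflc (@ltD n)) (F b)) ->
  sorted (reflc (@pair_lt n)) (flatten [seq map (tzip b) (F b) | b <- s]).
Proof.
have [irrB _ _] := rlex_strict_total B n.
have pair_trans := reflc_trans (pair_lt_strict_total n).
move=> + + F_sorted; elim: s => //= b s IH /andP[b_s s_uniq] bs_sorted.
rewrite sorted_pairwise // pairwise_cat; apply/and3P; split.
- apply/allrelP => x y /mapP[d _ ->] /flattenP[ys /mapP[b' b's ->] /mapP[d' _ ->]].
  have : rlex_le b b'.
    exact: allP (order_path_min (reflc_trans (rlex_strict_total B n)) bs_sorted) _ b's.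
  case/orP=> [/eqP ebb'|lt_bb']; first by move: b_s; rewrite ebb' b's.
  by rewrite /reflc /pair_lt !tfst_tzip lt_bb' orbT.
- rewrite -sorted_pairwise //; have := F_sorted b.
  elim: (F b) => //= d [|d' ds] //= IHd /andP[dd' dds]; rewrite IHd // andbT.
  rewrite /reflc /pair_lt !tfst_tzip !tsnd_tzip eqxx irrB /=.
  by case/orP: dd' => [/eqP ->|->]; rewrite ?eqxx ?orbT.
- by rewrite -sorted_pairwise //; apply: IH => //; apply: path_sorted bs_sorted.
Qed.

Lemma perm_tzip_enum n :
  perm_eq [seq tzip b d | b <- enum_words B n, d <- enum {: n.-tuple D}]
          (enum {: n.-tuple (B * D)%type}).
Proof.
apply: uniq_perm; last 1 first.
- move=> x; rewrite mem_enum -(tzip_unzip x).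
  by apply: allpairs_f; [apply: mem_enum_words | rewrite mem_enum].
- apply: allpairs_uniq; [exact: enum_words_uniq | exact: enum_uniq |].
  by move=> [b d] [b' d'] _ _ /= /tzip_inj[-> ->].
- exact: enum_uniq.
Qed.

Lemma sort_pair_lt_filter n (P : pred (n.-tuple (B * D)%type)) :
  sort (reflc (@pair_lt n)) [seq x <- enum {: n.-tuple (B * D)%type} | P x] =
  flatten [seq map (tzip b)
             (sort (reflc (@ltD n)) [seq d <- enum {: n.-tuple D} | P (tzip b d)])
          | b <- enum_words B n].
Proof.
have st := pair_lt_strict_total n.
apply: (sorted_eq (reflc_trans st) (reflc_anti st)).
- exact: sort_reflc_sorted.
- apply: sorted_pair_blocks => [||b]; rewrite ?enum_words_uniq ?enum_words_sorted //.
  exact: sort_reflc_sorted.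
rewrite perm_sort perm_sym; apply: perm_trans _ (perm_filter P (perm_tzip_enum n)).
rewrite filter_flatten -map_comp (eq_map (fun b => filter_map _ _ _)).
by apply: perm_allpairs_dep => // b _; rewrite perm_sort.
Qed.
End PairOrder.

Section BottomAlphabet.
Variable B : ordAlph.

Definition bot_lt (x y : option B) : bool :=
  match x, y with
  | None, Some _ => true
  | Some a, Some b => oa_lt a b
  | _, _ => false
  end.

Lemma bot_lt_irr : irreflexive bot_lt.
Proof. by case=> //= a; apply: oa_irr. Qed.

Lemma bot_lt_trans : transitive bot_lt.
Proof. by case=> [b|] [a|] [c|] //=; apply: oa_trans. Qed.

Lemma bot_lt_total (x y : option B) : x != y -> bot_lt x y || bot_lt y x.
Proof. by case: x y => [a|] [b|] //= ne; apply: oa_total; apply: contra ne => /eqP ->. Qed.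

Definition bot_alph : ordAlph := OrdAlph bot_lt_irr bot_lt_trans bot_lt_total.

Definition some_tuple n (b : n.-tuple B) : n.-tuple bot_alph := map_tuple Some b.

Lemma some_tuple_inj n : injective (@some_tuple n).
Proof. by move=> x y /(congr1 val) /(inj_map (@Some_inj _)) /val_inj. Qed.

Lemma rlex_some_tuple n (x y : n.-tuple B) :
  rlex_lt (some_tuple x) (some_tuple y) = rlex_lt x y.
Proof.
apply: eq_existsb => i; rewrite !tnth_map /=; congr (_ && _).
by apply: eq_forallb => j; rewrite !tnth_map (inj_eq (@Some_inj _)).
Qed.

Lemma all_some_tupleP n (b : n.-tuple bot_alph) :
  reflect (exists b' : n.-tuple B, b = some_tuple b') (all isSome b).
Proof.
apply: (iffP idP) => [b_some|[b' ->]]; last by rewrite all_map; apply/allP.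
have sz : size (pmap id b) == n.
  by move: b_some; rewrite size_pmap all_count => /eqP ->; rewrite size_tuple.
exists (Tuple sz); apply: val_inj => /=.
by elim: (tval b) b_some => //= -[a|] s IH //= /IH <-.
Qed.

Lemma filter_enum_words_bot n :
  [seq b : n.-tuple bot_alph <- enum_words bot_alph n | all isSome b] =
  map (@some_tuple n) (enum_words B n).
Proof.
have st := rlex_strict_total bot_alph n.
rewrite /enum_words filter_sort; [|exact: reflc_total st|exact: reflc_trans st].
rewrite -(sort_reflc_map (@some_tuple_inj n) (@rlex_some_tuple n)).
apply: (sort_reflc_perm st); apply: uniq_perm.
- by rewrite filter_uniq ?enum_uniq.
- by rewrite (map_inj_uniq (@some_tuple_inj n)) enum_uniq.
move=> b; rewrite mem_filter mem_enum andbT.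
by apply/all_some_tupleP/mapP => [[b' ->]|[b' _ ->]]; exists b'; rewrite ?mem_enum.
Qed.
End BottomAlphabet.

(** * Automatic transducers over an arbitrary order on tuples *)

Section GenAutomatic.
Variables (S G C : finType) (lt : forall n, rel (n.-tuple C)).
Implicit Types (Adom : dfa S) (Auniv : dfa (S * C)%type) (Ag : G -> dfa (S * C)%type).

Definition gen_out Auniv Ag m (u : seq S) : seq G :=
  pmap (fun x : m.-tuple C => [pick g | accepts (Ag g) (wtensor u x)])
    (sort (reflc (@lt m))
       [seq x : m.-tuple C <- enum {: m.-tuple C} | accepts Auniv (wtensor u x)]).

Definition gen_sem_at Adom Auniv Ag m (u : seq S) : option (seq G) :=
  if accepts Adom u then Some (gen_out Auniv Ag m u) else None.

Definition gen_sem Adom Auniv Ag u := gen_sem_at Adom Auniv Ag (size u) u.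

Definition gen_valid Adom Auniv Ag :=
  forall u, accepts Adom u -> forall x : (size u).-tuple C,
    accepts Auniv (wtensor u x) -> exists! g, accepts (Ag g) (wtensor u x).

Definition gen_automatic (f : transduction S G) :=
  exists Adom Auniv Ag,
    gen_valid Adom Auniv Ag /\ forall u, f u = gen_sem Adom Auniv Ag u.

Lemma gen_semE Adom Auniv Ag m u :
  size u = m -> gen_sem Adom Auniv Ag u = gen_sem_at Adom Auniv Ag m u.
Proof. by move=> <-. Qed.

Lemma gen_validP Adom Auniv Ag : gen_valid Adom Auniv Ag ->
  forall (u : seq S) (z : seq C), size z = size u -> accepts Adom u ->
  accepts Auniv (zip u z) -> exists! g, accepts (Ag g) (zip u z).
Proof. by move=> V u z sz /V /(_ (Tuple (introT eqP sz))). Qed.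
End GenAutomatic.

Lemma lex_automaticE k (S G : finType) (f : transduction S G) :
  lex_automatic k f <-> exists lam : 'I_k -> ordAlph, gen_automatic (@multi_lt k lam) f.
Proof. by []. Qed.

Section Transport.
Variables (S G C C' : finType) (phi : C -> C') (phi_bij : bijective phi).
Variables (lt : forall n, rel (n.-tuple C)) (lt' : forall n, rel (n.-tuple C')).
Hypothesis phi_mono :
  forall n (x y : n.-tuple C), lt' (map_tuple phi x) (map_tuple phi y) = lt x y.
Hypothesis lt'_st : forall n, strict_total (@lt' n).

Lemma accepts_premap_snd (M : dfa (S * C')%type) (u : seq S) (x : seq C) :
  accepts (dfa_premap M (fun p : S * C => (p.1, phi p.2))) (zip u x) =
  accepts M (zip u (map phi x)).
Proof.
rewrite accepts_premap; congr accepts.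
by elim: u x => [|a u IH] [|c x] //=; rewrite IH.
Qed.

Lemma gen_automatic_transport (f : transduction S G) :
  gen_automatic lt' f -> gen_automatic lt f.
Proof.
case=> Adom [Auniv [Ag [V fE]]].
pose h (p : S * C) := (p.1, phi p.2).
exists Adom, (dfa_premap Auniv h), (fun g => dfa_premap (Ag g) h); split.
  move=> u Hu x; rewrite /wtensor accepts_premap_snd => /(V u Hu (map_tuple phi x)).
  by case=> g [Hg U]; exists g; split=> [|g']; rewrite accepts_premap_snd //; apply: U.
move=> u; rewrite fE /gen_sem /gen_sem_at; case: ifP => // _; congr Some; rewrite /gen_out.
set n := size u; pose mp := @map_tuple n _ _ phi.
have mp_inj : injective mp by apply: bij_inj; apply: map_tuple_bij.
have perm_mp := perm_map_enum (map_tuple_bij n phi_bij).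
rewrite -(sort_reflc_perm (lt'_st n) (perm_filter _ perm_mp)).
rewrite filter_map (sort_reflc_map mp_inj (@phi_mono n)) pmap_map.
rewrite (@eq_filter _ (fun x : n.-tuple C => accepts (dfa_premap Auniv h) (wtensor u x))
                     (preim mp (fun x => accepts Auniv (wtensor u x)))).
  by apply: eq_pmap => x; apply: eq_pick => g; rewrite /wtensor accepts_premap_snd.
by move=> x; rewrite /wtensor accepts_premap_snd.
Qed.
End Transport.

Section Maplex.
Variables (S G : finType) (B : ordAlph) (g : transduction (S * B)%type G) (u : seq S).

Lemma maplex_Some (F : (size u).-tuple B -> seq G) :
  (forall b : (size u).-tuple B, g (wtensor u b) = Some (F b)) ->
  maplex g u = Some (flatten [seq F b | b <- enum_words B (size u)]).
Proof.
move=> gF; rewrite /maplex (eq_map gF) all_map (@eq_all _ _ predT) ?all_predT //.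
by rewrite pmap_map; congr (Some (flatten _)); elim: (enum_words _ _) => //= b s ->.
Qed.

Lemma maplex_None (b : (size u).-tuple B) : g (wtensor u b) = None -> maplex g u = None.
Proof.
rewrite /maplex => gb; case: allP => // all_some.
by have := all_some _ (map_f _ (mem_enum_words b)); rewrite gb.
Qed.
End Maplex.

Section SplitAlphabet.
Variables (S G : finType) (k : nat) (lam : 'I_k.+1 -> ordAlph).

Definition alph_tail : 'I_k -> ordAlph := fun j => lam (lift ord0 j).

Definition split_letter (x : prodAlph lam) : (lam ord0 * prodAlph alph_tail)%type :=
  (x ord0, [ffun j => x (lift ord0 j)]).

Lemma split_letter_bij : bijective split_letter.
Proof.
apply: inj_card_bij.
  move=> x y [x0y0 /ffunP xy]; apply/ffunP => i.
  by case: (unliftP ord0 i) => [j ->|->] //; have := xy j; rewrite !ffunE.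
rewrite card_prod /prodAlph !card_dep_ffun !foldrE !big_map.
by rewrite big_ord_recl.
Qed.

Lemma pair_lt_split_letter n (x y : n.-tuple (prodAlph lam)) :
  pair_lt (@multi_lt k alph_tail) (map_tuple split_letter x) (map_tuple split_letter y) =
  multi_lt x y.
Proof.
have head_comp (z : n.-tuple (prodAlph lam)) :
    tfst (map_tuple split_letter z) = comp_word z ord0.
  by apply: val_inj; rewrite /= -map_comp.
have tail_comp (z : n.-tuple (prodAlph lam)) j :
    comp_word (tsnd (map_tuple split_letter z)) j = comp_word z (lift ord0 j).
  by apply: val_inj; rewrite /= -!map_comp; apply: eq_map => b /=; rewrite ffunE.
rewrite /pair_lt !head_comp /multi_lt exists_before_recl; congr (_ || _ && _).
apply: eq_existsb => j; rewrite !tail_comp; congr (_ && _).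
by apply: eq_forallb => j'; rewrite !tail_comp.
Qed.

Lemma gen_automatic_split (f : transduction S G) :
  gen_automatic (@multi_lt k.+1 lam) f <->
  gen_automatic (@pair_lt (lam ord0) _ (@multi_lt k alph_tail)) f.
Proof.
have [merge splitK mergeK] := split_letter_bij.
split; last first.
  apply: (gen_automatic_transport split_letter_bij pair_lt_split_letter).
  exact: pair_lt_strict_total (@multi_strict_total k alph_tail).
apply: (@gen_automatic_transport S G _ _ merge _ _ _ _ (@multi_strict_total k.+1 lam)).
  exact: Bijective mergeK splitK.
move=> n x y; have mergeK_tuple z : map_tuple split_letter (map_tuple merge z) = z.
  by apply: val_inj; rewrite /= -map_comp (eq_map mergeK) map_id.
by rewrite -pair_lt_split_letter !mergeK_tuple.
Qed.
End SplitAlphabet.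

(** * Level zero: simple transductions *)

Section SingletonAlphabet.
Variables (S G C : finType) (c0 : C) (C_single : forall c : C, c = c0).
Variable lt : forall n, rel (n.-tuple C).

Definition pad (u : seq S) : seq (S * C) := map (fun a => (a, c0)) u.

Lemma tuple_single n (x : n.-tuple C) : x = nseq_tuple n c0.
Proof. by apply: eq_from_tnth => i; rewrite tnth_nseq; apply: C_single. Qed.

Lemma wtensor_pad (u : seq S) (x : (size u).-tuple C) : wtensor u x = pad u.
Proof. by rewrite (tuple_single x) /wtensor /=; elim: u {x} => //= a u ->. Qed.

Lemma accepts_premap_pad (M : dfa S) u : accepts (dfa_premap M fst) (pad u) = accepts M u.
Proof. by rewrite accepts_premap /pad -map_comp map_id. Qed.

Definition single_out (Auniv : dfa (S * C)%type) (Ag : G -> dfa (S * C)%type) u :=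
  if accepts Auniv (pad u) then [pick g | accepts (Ag g) (pad u)] else None.

Lemma gen_sem_single Adom Auniv Ag u :
  gen_sem lt Adom Auniv Ag u =
  if accepts Adom u then Some (seq_of_opt (single_out Auniv Ag u)) else None.
Proof.
rewrite /gen_sem /gen_sem_at; case: ifP => // _; congr Some.
rewrite /gen_out (enum_singleton (@tuple_single (size u))) /= !wtensor_pad /single_out.
case: ifP => //= _; rewrite wtensor_pad; by case: pickP.
Qed.

Lemma simple_of_gen_automatic (f : transduction S G) :
  gen_automatic lt f -> simple_trans f.
Proof.
case=> Adom [Auniv [Ag [_ fE]]].
pose M (i : option (option G)) := if i is Some o
  then dfa_premap (if o is Some g then Ag g else Auniv) (fun a => (a, c0)) else Adom.
pose lang (o : option G) := dfa_comb M (fun v => v None &&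
  (o == if v (Some None) then [pick g | v (Some (Some g))] else None)).
have langE o u : accepts (lang o) u = accepts Adom u && (o == single_out Auniv Ag u).
  rewrite accepts_comb !ffunE !accepts_premap /single_out.
  by under eq_pick => g do rewrite ffunE accepts_premap.
exists #|{: option G}|, (fun i => lang (enum_val i)), (fun i => seq_of_opt (enum_val i)).
split; [|split] => [i j nij u|i|u]; last split.
- rewrite !langE; apply: contra nij => /andP[/andP[_ /eqP ei] /andP[_ /eqP ej]].
  by rewrite -(inj_eq enum_val_inj) ei ej.
- by case: (enum_val i).
- by move=> i; rewrite langE fE gen_sem_single => /andP[-> /eqP ->].
- move=> none; rewrite fE gen_sem_single; case: ifP => // Hu.
  by have := none (enum_rank (single_out Auniv Ag u)); rewrite langE enum_rankK Hu eqxx.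
Qed.

Lemma gen_automatic_of_simple (f : transduction S G) :
  simple_trans f -> gen_automatic lt f.
Proof.
case=> n [L [w [disj [w_size fE]]]].
have L_uniq u i j : accepts (L i) u -> accepts (L j) u -> i = j.
  move=> Hi Hj; apply/eqP; apply: contraT => /disj /(_ u); by rewrite Hi Hj.
pose some_lang (P : pred 'I_n) := dfa_comb L (fun v => [exists i, v i && P i]).
have some_langE P u i : accepts (L i) u -> accepts (some_lang P) u = P i.
  move=> Hi; rewrite accepts_comb; apply/existsP/idP => [[j]|Pi]; last first.
    by exists i; rewrite ffunE Hi.
  by rewrite ffunE => /andP[Hj]; rewrite (L_uniq _ _ _ Hi Hj).
have some_langP u : reflect (exists i, accepts (L i) u) (accepts (some_lang predT) u).
  rewrite accepts_comb; apply: (iffP existsP) => -[i Hi]; exists i; move: Hi;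
  by rewrite ffunE /= andbT.
exists (some_lang predT), (dfa_premap (some_lang (fun i => w i != [::])) fst),
  (fun g => dfa_premap (some_lang (fun i => w i == [:: g])) fst); split.
- move=> u /some_langP [i Hi] x; rewrite !wtensor_pad accepts_premap_pad (some_langE _ _ _ Hi).
  move: (w_size i); case Ew: (w i) => [|g [|//]] // _ _.
  exists g; split=> [|g']; rewrite accepts_premap_pad (some_langE _ _ _ Hi) Ew //.
  by move=> /eqP[].
- move=> u; rewrite gen_sem_single /single_out !accepts_premap_pad.
  case: (some_langP u) => [[i Hi]|none]; last first.
    by apply: (proj2 (fE u)) => i; apply/negP => Hi; apply: none; exists i.
  rewrite (proj1 (fE u) i Hi) (some_langE _ _ _ Hi).
  rewrite (@eq_pick _ _ (fun g => w i == [:: g])); last first.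
    by move=> g; rewrite accepts_premap_pad (some_langE _ _ _ Hi).
  move: (w_size i); case: (w i) => [|g [|//]] //= _.
  by case: pickP => [g' /eqP[->] // | /(_ g)]; rewrite eqxx.
Qed.
End SingletonAlphabet.

Lemma prodAlph0_single (lam : 'I_0 -> ordAlph) :
  exists c0 : prodAlph lam, forall c, c = c0.
Proof.
have c0 : prodAlph lam by apply: finfun => -[].
by exists c0 => c; apply/ffunP => -[].
Qed.

(** * One level of maplex *)

Section MaplexAutomatic.
Variables (S G : finType) (B : ordAlph) (D : finType) (ltD : forall n, rel (n.-tuple D)).
Hypothesis ltD_st : forall n, strict_total (@ltD n).

Definition assoc_letter (p : S * (B * D)) : (S * B) * D := ((p.1, p.2.1), p.2.2).

Lemma accepts_premap_assoc (M : dfa ((S * B) * D)%type) (u : seq S) (x : seq (B * D)) :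
  accepts (dfa_premap M assoc_letter) (zip u x) =
  accepts M (zip (zip u (unzip1 x)) (unzip2 x)).
Proof.
rewrite accepts_premap; congr accepts.
by elim: u x => [|a u IH] [|[b d] x] //=; rewrite IH.
Qed.

Lemma gen_valid_forall Ad Au (Ag : G -> dfa ((S * B) * D)%type) :
  gen_valid Ad Au Ag ->
  gen_valid (dfa_forall Ad) (dfa_premap Au assoc_letter)
    (fun g => dfa_premap (Ag g) assoc_letter).
Proof.
move=> V u; rewrite accepts_forall => /forallP Hu x; rewrite /wtensor accepts_premap_assoc.
have sz : size (unzip2 x) = size (zip u (unzip1 x)).
  by rewrite size_zip !size_map size_tuple minnn.
move=> /(gen_validP V sz (Hu (tfst x))) [g0 [Hg0 g0_uniq]].
by exists g0; split=> [|g']; rewrite accepts_premap_assoc // => /g0_uniq.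
Qed.

Lemma maplex_gen_automatic (g : transduction (S * B)%type G) (f : transduction S G) :
  gen_automatic ltD g -> (forall u, f u = maplex g u) ->
  gen_automatic (@pair_lt B D ltD) f.
Proof.
case=> Ad [Au [Ag [V gE]]] fE.
exists (dfa_forall Ad), (dfa_premap Au assoc_letter),
  (fun g => dfa_premap (Ag g) assoc_letter); split; first exact: gen_valid_forall.
move=> u; rewrite fE /gen_sem /gen_sem_at accepts_forall.
case: (boolP [forall b, _]) => [/forallP Hu|/forallPn[b Hb]]; last first.
  by rewrite (maplex_None (b := b)) // gE /gen_sem /gen_sem_at (negbTE Hb).
rewrite (maplex_Some (F := fun b => gen_out ltD Au Ag (size u) (zip u b))); last first.
  move=> b; rewrite gE (gen_semE _ _ _ _ (m := size u)) /gen_sem_at ?Hu //.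
  by rewrite size_zip size_tuple minnn.
rewrite /gen_out (sort_pair_lt_filter ltD_st) pmap_flatten -map_comp.
congr (Some (flatten _)); apply: eq_map => b; rewrite /comp pmap_map.
have accE M d : accepts (dfa_premap M assoc_letter) (wtensor u (tzip b d)) =
                accepts M (wtensor (zip u b) d).
  by rewrite /wtensor accepts_premap_assoc unzip1_tzip unzip2_tzip.
rewrite (eq_filter (accE Au)); apply: eq_pmap => d; apply: eq_pick => g0.
by rewrite accE.
Qed.
End MaplexAutomatic.

Section AutomaticMaplex.
Variables (S G : finType) (B : ordAlph) (D : finType) (ltD : forall n, rel (n.-tuple D)).
Hypothesis ltD_st : forall n, strict_total (@ltD n).

Definition unbot_letter (p : (S * bot_alph B) * D) : option (S * (B * D)) :=
  if p.1.2 is Some b then Some (p.1.1, (b, p.2)) else None.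

Lemma accepts_comap_unbot (M : dfa (S * (B * D))%type) u (b : seq (option B)) (d : seq D) :
  size b = size u -> size d = size u ->
  accepts (dfa_comap M unbot_letter) (zip (zip u b) d) =
  all isSome b && accepts M (zip u (zip (pmap id b) d)).
Proof.
move=> sb sd; rewrite accepts_comap.
have -> : all (fun p => unbot_letter p != None) (zip (zip u b) d) = all isSome b.
  by elim: u b d sb sd => [|a u IH] [|[c|] b] [|e d] //= [sb] [sd]; rewrite IH.
case: (boolP (all isSome b)) => //= b_some; congr accepts.
by elim: u b d sb sd b_some => [|a u IH] [|[c|] b] [|e d] //= [sb] [sd] /IH ->.
Qed.

Lemma gen_valid_unbot Ad Au (Ag : G -> dfa (S * (B * D))%type) :
  gen_valid Ad Au Ag ->
  gen_valid (dfa_premap Ad (@fst S (bot_alph B))) (dfa_comap Au unbot_letter)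
    (fun g => dfa_comap (Ag g) unbot_letter).
Proof.
move=> V w; rewrite accepts_premap => Hw x.
have sw1 : size (unzip1 w) = size w by rewrite size_map.
have sw2 : size (unzip2 w) = size (unzip1 w) by rewrite !size_map.
have sx : size x = size (unzip1 w) by rewrite size_tuple sw1.
rewrite /wtensor -[w in zip w _]zip_unzip !accepts_comap_unbot // => /andP[w_some Hx].
have sz : size (zip (pmap id (unzip2 w)) x) = size (unzip1 w).
  by move: w_some; rewrite size_zip size_pmap sx all_count => /eqP ->; rewrite sw2 minnn.
have [g0 [Hg0 g0_uniq]] := gen_validP V sz Hw Hx.
by exists g0; split=> [|g']; rewrite accepts_comap_unbot // w_some //= => /g0_uniq.
Qed.

(* The least letter [None] makes the tuples over [bot_alph B] nonempty, so that
   [maplex g] is undefined exactly where [f] is even if [B] is empty; tuples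
   containing [None] produce empty outputs. *)
Lemma gen_automatic_maplex (f : transduction S G) :
  gen_automatic (@pair_lt B D ltD) f ->
  exists g : transduction (S * bot_alph B)%type G,
    gen_automatic ltD g /\ forall u, f u = maplex g u.
Proof.
case=> Ad [Au [Ag [V fE]]].
pose Adg := dfa_premap Ad (@fst S (bot_alph B)).
pose Aug := dfa_comap Au unbot_letter.
pose Agg g := dfa_comap (Ag g) unbot_letter.
exists (gen_sem ltD Adg Aug Agg); split.
  by exists Adg, Aug, Agg; split=> //; apply: gen_valid_unbot.
move=> u; rewrite fE [LHS]/gen_sem /gen_sem_at.
have AdgE (b : (size u).-tuple (bot_alph B)) : accepts Adg (zip u b) = accepts Ad u.
  by rewrite accepts_premap; congr accepts; apply: unzip1_zip; rewrite size_tuple.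
case: (boolP (accepts Ad u)) => Hu; last first.
  rewrite (maplex_None (b := nseq_tuple (size u) (None : bot_alph B))) //.
  by rewrite /gen_sem /gen_sem_at AdgE (negbTE Hu).
pose block (b : (size u).-tuple (bot_alph B)) := gen_out ltD Aug Agg (size u) (zip u b).
rewrite (maplex_Some (F := block)); last first.
  move=> b; rewrite (gen_semE _ _ _ _ (m := size u)) /gen_sem_at ?AdgE ?Hu //.
  by rewrite size_zip size_tuple minnn.
rewrite /gen_out (sort_pair_lt_filter ltD_st) pmap_flatten -map_comp.
rewrite (@flatten_map_filter _ _ block (fun b => all isSome b)); last first.
  move=> b b_none; rewrite /block /gen_out (@eq_filter _ _ pred0) ?filter_pred0 //.
  by move=> d; rewrite /wtensor accepts_comap_unbot ?size_tuple // (negbTE b_none).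
rewrite filter_enum_words_bot -map_comp; congr (Some (flatten _)).
apply: eq_map => b; rewrite /comp /block /gen_out pmap_map.
have accE M (d : (size u).-tuple D) :
    accepts (dfa_comap M unbot_letter) (wtensor (zip u (some_tuple b)) d) =
    accepts M (wtensor u (tzip b d)).
  rewrite accepts_comap_unbot ?size_tuple // all_map (introT allP) //=.
  by rewrite (map_pK (g := Some) (f := id)).
rewrite (eq_filter (accE Au)); apply: eq_pmap => d; apply: eq_pick => g0.
by rewrite accE.
Qed.
End AutomaticMaplex.

Lemma isLex_of_gen_automatic k (S G : finType) (lam : 'I_k -> ordAlph)
    (f : transduction S G) :
  gen_automatic (@multi_lt k lam) f -> isLex k f.
Proof.
elim: k S G lam f => [|k IHk] S G lam f.
  have [c0 c0_single] := prodAlph0_single lam.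
  by move=> /(simple_of_gen_automatic c0_single) /Lex0.
move=> /gen_automatic_split /(gen_automatic_maplex (@multi_strict_total k _)) [g [g_auto fE]].
exact: LexS (IHk _ _ _ _ g_auto) fE.
Qed.

Lemma unit_lt_total (x y : unit) : x != y -> false || false.
Proof. by case: x; case: y. Qed.

Definition unit_alph : ordAlph :=
  @OrdAlph unit (fun _ _ => false) (fun _ => erefl) (fun _ _ _ _ => id) unit_lt_total.

(* Lists make [alph_tail (alph_of_seq (B :: ls))] convertible to [alph_of_seq ls];
   the default [unit_alph] of [nth] is never reached. *)
Definition alph_of_seq (ls : seq ordAlph) : 'I_(size ls) -> ordAlph :=
  fun i => nth unit_alph ls i.
Arguments alph_of_seq : clear implicits.

Lemma gen_automatic_of_isLex k (S G : finType) (f : transduction S G) :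
  isLex k f ->
  exists ls : seq ordAlph, size ls = k /\ gen_automatic (@multi_lt _ (alph_of_seq ls)) f.
Proof.
elim=> {k S G f} [S G f f_simple|k S G B g f _ [ls [<- g_auto]] fE].
  exists [::]; split=> //; have [c0 c0_single] := prodAlph0_single (alph_of_seq [::]).
  exact: gen_automatic_of_simple c0_single _ _ f_simple.
exists (B :: ls); split=> //; apply/(@gen_automatic_split S G _ (alph_of_seq (B :: ls))).
exact: (@maplex_gen_automatic S G B _ _ (@multi_strict_total _ (alph_of_seq ls))
          g f g_auto fE).
Qed.

Theorem mainTheorem5 (k : nat) (Hk : 1 <= k) (S G : finType)
    (f : transduction S G) :
  isLex k f <-> lex_automatic k f.
Proof.
rewrite lex_automaticE; split=> [/gen_automatic_of_isLex [ls [<- ls_auto]]|[lam]].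
  by exists (alph_of_seq ls).
exact: isLex_of_gen_automatic.
Qed.
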